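(* Let $G=(V,E)$ be a finite graph with edge weights $\mathbf{v}=(v_e)_{e\in E}$, let $q$ be an indeterminate, and let $i,j\in V$ with $i\ne j$. Then \[ Z_G(q,\mathbf{v})=\sum_{\substack{W\subseteq V\\ W\ni i,\ W\not\ni j}}\Bigl[q-1+\prod_{e\in E(W,j)}(1+v_e)\Bigr]C_{G[W]}(\mathbf{v})\,Z_{G[V\setminus W]}(q,\mathbf{v}), \] where $E(W,j)$ denotes the set of edges with one endpoint in $W$ and the other endpoint at $j$. In particular, \[ C_G(\mathbf{v})=\sum_{\substack{W\subseteq V\\ W\ni i,\ W\not\ni j}}\Bigl[\prod_{e\in E(W,j)}(1+v_e)-1\Bigr]C_{G[W]}(\mathbf{v})\,C_{G[V\setminus W]}(\mathbf{v}). \]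
   Context: Graphs may have loops and multiple edges. For a finite graph $H$: $Z_H(q,\mathbf{v})=\sum_{A\subseteq E(H)}q^{k(A)}\prod_{e\in A}v_e$ with $k(A)$ the number of connected components of $(V(H),A)$, and $C_H(\mathbf{v})=\sum_{A\subseteq E(H),\,k(A)=1}\prod_{e\in A}v_e$. $G[W]$ is the induced subgraph on $W$ (edges weighted as in $G$). *)

From mathcomp Require Import all_boot all_order all_algebra.
Set Implicit Arguments. Unset Strict Implicit. Unset Printing Implicit Defensive.
Import GRing.Theory.
Local Open Scope ring_scope.

(* A finite multigraph (loops and multiple edges allowed): vertex type V,
   edge type E, each edge e has endpoints src e and tgt e (orientation
   irrelevant for everything below). *)
Section Graph.
Variables (V E : finType) (src tgt : E -> V).

Definition ind_edges (W : {set V}) : {set E} :=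
  [set e | (src e \in W) && (tgt e \in W)].

Definition adj (A : {set E}) : rel V :=
  fun x y => [exists e in A, ((src e == x) && (tgt e == y)) ||
                             ((src e == y) && (tgt e == x))].

Definition ncomp (W : {set V}) (A : {set E}) : nat :=
  #|[set [set y in W | connect (adj A) x y] | x in W]|.

Definition Zpol (R : comNzRingType) (W : {set V}) (q : R) (v : E -> R) : R :=
  \sum_(A : {set E} | A \subset ind_edges W) q ^+ ncomp W A * \prod_(e in A) v e.

Definition Cpol (R : comNzRingType) (W : {set V}) (v : E -> R) : R :=
  \sum_(A : {set E} | (A \subset ind_edges W) && (ncomp W A == 1%N))
     \prod_(e in A) v e.

Definition cut_edges (W : {set V}) (j : V) : {set E} :=
  [set e | ((src e \in W) && (tgt e == j)) || ((tgt e \in W) && (src e == j))].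

End Graph.

(** Sort the edge sets A of G by the vertex set W of the component containing i
    in G - j (edges at j removed). Given W, the set A splits uniquely into a
    spanning connected edge set A1 of G[W], an arbitrary edge set A2 of
    G[V \ W] and an arbitrary subset S of E(W, j); conversely any such triple
    has component W. Contracting W shows k(A) = k(A2) + [S = 0]: W is a
    component of its own if S is empty and is glued to the component of j
    otherwise. Summing q^k(A) v^A over the three independent pieces gives
    C_{G[W]} Z_{G[V \ W]} times sum_S q^[S=0] v^S = q - 1 + prod_{E(W,j)} (1 + v_e);
    keeping only k(A) = 1 forces S nonempty and k(A2) = 1, which gives the
    identity for C_G. *)
From mathcomp Require Import all_boot all_order all_algebra.
Import GRing.Theory.
Local Open Scope ring_scope.
Set Implicit Arguments. Unset Strict Implicit. Unset Printing Implicit Defensive.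

Lemma connect_map_inv (T T' : finType) (e : rel T) (e' : rel T') (P : pred T) (f : T -> T') :
  (forall x y, P x -> e x y -> P y && connect e' (f x) (f y)) ->
  forall x y, P x -> connect e x y -> P y && connect e' (f x) (f y).
Proof.
move=> step x y Px /connectP[p]; elim: p x Px => [|z p IHp] x Px /=.
  by move=> _ ->; rewrite Px connect0.
case/andP=> exz pz ey; have /andP[Pz c1] := step _ _ Px exz.
by have /andP[-> c2] := IHp _ Pz pz ey; exact: connect_trans c1 c2.
Qed.

Lemma card_imset_ker_le (T T1 T2 : finType) (X : {set T}) (h1 : T -> T1) (h2 : T -> T2) :
  {in X &, forall a b, h1 a = h1 b -> h2 a = h2 b} -> (#|h2 @: X| <= #|h1 @: X|)%N.
Proof.
move=> h12; case: (set_0Vmem X) => [-> | [x0 x0X]]; first by rewrite !imset0 cards0.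
pose g c := h2 (odflt x0 [pick x in X | h1 x == c]).
have gE x : x \in X -> g (h1 x) = h2 x.
  rewrite /g => xX; case: pickP => [x' /andP[x'X /eqP] | /(_ x)]; first exact: h12.
  by rewrite xX eqxx.
suff -> : h2 @: X = g @: (h1 @: X) by apply: leq_imset_card.
by rewrite -imset_comp; apply: eq_in_imset => x xX /=; rewrite gE.
Qed.

Lemma card_imset_ker (T T1 T2 : finType) (X : {set T}) (h1 : T -> T1) (h2 : T -> T2) :
  {in X &, forall a b, (h1 a == h1 b) = (h2 a == h2 b)} -> #|h1 @: X| = #|h2 @: X|.
Proof.
move=> h12; apply/eqP; rewrite eqn_leq !card_imset_ker_le // => a b aX bX /eqP;
  by [rewrite h12 // => /eqP | rewrite -h12 // => /eqP].
Qed.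

Section Connectivity.
Variables (V E : finType) (src tgt : E -> V).
Local Notation adj := (adj src tgt).
Local Notation ncomp := (ncomp src tgt).
Local Notation ind := (ind_edges src tgt).
Implicit Types (A B : {set E}) (W X Y : {set V}).

Lemma adjP A x y : reflect (exists2 e, e \in A &
   ((src e == x) && (tgt e == y)) || ((src e == y) && (tgt e == x))) (adj A x y).
Proof.
apply: (iffP existsP) => [[e /andP[eA h]] | [e eA h]]; first by exists e.
by exists e; rewrite eA.
Qed.

Lemma adj_sym A : symmetric (adj A).
Proof. by move=> x y; apply/adjP/adjP => -[e eA h]; exists e; rewrite // orbC. Qed.

Lemma connect_adj_sym A : connect_sym (adj A).
Proof. exact: sym_connect_sym (adj_sym A). Qed.

Lemma in_ind_edges W e : (e \in ind W) = (src e \in W) && (tgt e \in W).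
Proof. by rewrite inE. Qed.

Lemma ind_edgesS W Y : W \subset Y -> ind W \subset ind Y.
Proof.
by move=> sWY; apply/subsetP => e; rewrite !in_ind_edges => /andP[/(subsetP sWY) -> /(subsetP sWY)].
Qed.

Lemma adj_sub A B x y : A \subset B -> adj A x y -> adj B x y.
Proof. by move=> sAB /adjP[e eA h]; apply/adjP; exists e; rewrite ?(subsetP sAB). Qed.

Lemma adj_setI_ind W A x y : x \in W -> y \in W -> adj A x y -> adj (A :&: ind W) x y.
Proof.
move=> xW yW /adjP[e eA h]; apply/adjP; exists e; rewrite // inE eA in_ind_edges.
by case/orP: h => /andP[/eqP -> /eqP ->]; rewrite xW yW.
Qed.

Lemma connect_adj_sub A B x y : A \subset B -> connect (adj A) x y -> connect (adj B) x y.
Proof. by move=> sAB; apply: connect_sub => {}x {}y /(adj_sub sAB)/connect1. Qed.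

Lemma adj_connect_map A B (f : V -> V) x y :
  (forall e, e \in A -> connect (adj B) (f (src e)) (f (tgt e))) ->
  adj A x y -> connect (adj B) (f x) (f y).
Proof.
move=> hA /adjP[e eA /orP[]/andP[/eqP <- /eqP <-]]; first exact: hA.
by rewrite connect_adj_sym; apply: hA.
Qed.

Definition component W A x := [set y in W | connect (adj A) x y].

Lemma eq_component W A x y : x \in W -> y \in W ->
  (component W A x == component W A y) = connect (adj A) x y.
Proof.
move=> xW yW; apply/eqP/idP => [eq_xy | cxy].
  have : y \in component W A y by rewrite inE yW connect0.
  by rewrite -eq_xy inE => /andP[].
apply/setP => z; rewrite !inE; case: (z \in W) => //=.
by apply/idP/idP; apply: connect_trans; rewrite // connect_adj_sym.
Qed.

Lemma ncompE W A : ncomp W A = #|component W A @: W|.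
Proof. by []. Qed.

Lemma eq_ncomp_map X Y A B (f : V -> V) :
  {in X, forall x, f x \in Y} ->
  {in X &, forall x y, connect (adj A) x y = connect (adj B) (f x) (f y)} ->
  {in Y, forall y, exists2 x, x \in X & connect (adj B) (f x) y} ->
  ncomp X A = ncomp Y B.
Proof.
move=> fY fconnect fonto; rewrite !ncompE.
rewrite (@card_imset_ker _ _ _ X _ (component Y B \o f)); last first.
  by move=> x y xX yX; rewrite /= !eq_component ?fY // fconnect.
rewrite imset_comp; suff -> : component Y B @: (f @: X) = component Y B @: Y by [].
apply/eqP; rewrite eqEsubset; apply/andP; split; apply/subsetP => _ /imsetP[y yY ->].
  by case/imsetP: yY => x xX ->; rewrite imset_f ?fY.
have [x xX cxy] := fonto y yY; apply/imsetP; exists (f x); first exact: imset_f.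
by apply/eqP; rewrite eq_sym eq_component ?fY.
Qed.

Lemma ncomp_eq1P W A i : i \in W ->
  reflect (forall y, y \in W -> connect (adj A) i y) (ncomp W A == 1%N).
Proof.
move=> iW; rewrite ncompE; apply: (iffP cards1P) => [[c hc] y yW | conn_i].
  have /set1P cy : component W A y \in [set c] by rewrite -hc imset_f.
  have /set1P ci : component W A i \in [set c] by rewrite -hc imset_f.
  by rewrite -(eq_component A iW yW) ci cy.
exists (component W A i); apply/setP => c; rewrite inE.
apply/imsetP/eqP => [[x xW ->] | ->]; last by exists i.
by apply/eqP; rewrite eq_component // connect_adj_sym conn_i.
Qed.

Lemma ncomp_gt0 W A x : x \in W -> (0 < ncomp W A)%N.
Proof. by move=> xW; apply/card_gt0P; exists (component W A x); apply: imset_f. Qed.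

Lemma connect_adj_isolated W A i y : i \notin W -> A \subset ind W ->
  connect (adj A) i y -> y = i.
Proof.
move=> iW sA cy.
have step x z : pred1 i x -> adj A x z -> pred1 i z && connect (adj A) (id x) (id z).
  move=> /eqP -> /adjP[e /(subsetP sA)]; rewrite inE => /andP[sW tW].
  by case/orP=> /andP[/eqP e1 /eqP e2]; [rewrite -e1 sW in iW | rewrite -e2 tW in iW].
by case/andP: (connect_map_inv step (eqxx i) cy) => /eqP.
Qed.

Lemma ncomp_setU1_isolated W A i : i \notin W -> A \subset ind W ->
  ncomp (i |: W) A = (ncomp W A).+1.
Proof.
move=> iW sA; have conn_i := connect_adj_isolated iW sA.
have comp_i : component (i |: W) A i = [set i].
  apply/setP => y; rewrite !inE; apply/andP/eqP => [[_ /conn_i] // | ->].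
  by rewrite eqxx connect0.
have comp_W : {in W, component (i |: W) A =1 component W A}.
  move=> x xW; apply/setP => y; rewrite !inE; case: eqVneq => [-> | //] /=.
  by rewrite (negbTE iW); apply/negP; rewrite connect_adj_sym => /conn_i xi; rewrite -xi xW in iW.
rewrite !ncompE imsetU1 cardsU1 comp_i (eq_in_imset comp_W).
suff -> : [set i] \notin component W A @: W by rewrite add1n.
apply/imsetP => -[x xW /setP/(_ i)]; rewrite !inE eqxx.
by rewrite (negbTE iW).
Qed.

Lemma ncomp_retract Y A B (f : V -> V) :
  B \subset A -> (forall x, f x \in Y) -> {in Y, forall y, f y = y} ->
  (forall x, connect (adj A) x (f x)) ->
  (forall e, e \in A -> connect (adj B) (f (src e)) (f (tgt e))) ->
  ncomp [set: V] A = ncomp Y B.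
Proof.
move=> sBA fY fid conn_f fA; apply: (eq_ncomp_map (f := f)) => [x _ | x y _ _ | y yY].
- exact: fY.
- apply/idP/idP => [cxy | cfxy].
    have step a b : predT a -> adj A a b -> predT b && connect (adj B) (f a) (f b).
      by move=> _ /(adj_connect_map fA).
    by case/andP: (connect_map_inv step isT cxy).
  apply: connect_trans (conn_f x) _; apply: connect_trans (connect_adj_sub sBA cfxy) _.
  by rewrite connect_adj_sym.
- by exists y; rewrite ?inE ?fid ?connect0.
Qed.

End Connectivity.

Section RootComponent.
Variables (V E : finType) (src tgt : E -> V) (i j : V).
Local Notation adj := (adj src tgt).
Local Notation ncomp := (ncomp src tgt).
Local Notation ind := (ind_edges src tgt).
Implicit Types (A S : {set E}) (W : {set V}).

(* Every edge set A of G determines the vertex set W of the paper's sum: the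
   component of i in the graph G - j with the edges of A. *)
Definition root_comp A := [set y | connect (adj (A :&: ind (~: [set j]))) i y].

Lemma root_comp_i A : i \in root_comp A.
Proof. by rewrite inE connect0. Qed.

Lemma root_comp_j A : i != j -> j \notin root_comp A.
Proof.
move=> ij; rewrite inE; apply/negP => cj.
have step x z : x != j -> adj (A :&: ind (~: [set j])) x z ->
    (z != j) && connect (adj A) (id x) (id z).
  move=> _ /[dup] /(adj_sub (subsetIl _ _)) /connect1 ->; rewrite andbT.
  case/adjP=> e /setIP[_]; rewrite in_ind_edges !inE => /andP[sj tj].
  by case/orP=> /andP[/eqP e1 /eqP e2]; rewrite -?e1 -?e2.
by case/andP: (connect_map_inv step ij cj) => /eqP.
Qed.

Lemma root_comp_edge A e : e \in A -> src e != j -> tgt e != j ->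
  (src e \in root_comp A) = (tgt e \in root_comp A).
Proof.
move=> eA sj tj; have st : adj (A :&: ind (~: [set j])) (src e) (tgt e).
  by apply/adjP; exists e; rewrite ?eqxx // inE eA in_ind_edges !inE sj tj.
rewrite !inE; apply/idP/idP => ci; first exact: connect_trans ci (connect1 st).
by apply: connect_trans ci _; rewrite connect_adj_sym connect1.
Qed.

Variables (W : {set V}) (iW : i \in W) (jW : j \notin W).
Local Notation cut := (cut_edges src tgt W j).

Lemma in_cut_edges e :
  (e \in cut) = ((src e \in W) && (tgt e == j)) || ((tgt e \in W) && (src e == j)).
Proof. by rewrite inE. Qed.

Lemma neq_j x : x \in W -> x != j.
Proof. by apply: contraTneq => ->. Qed.

Lemma split_edge_sides e : e \in ind W :|: ind (~: W) :|: cut ->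
  src e != j -> tgt e != j -> (src e \in W) = (tgt e \in W).
Proof.
rewrite !inE => /orP[/orP[] | ] /[swap] sj /[swap] tj.
- by case/andP=> -> ->.
- by case/andP=> /negbTE -> /negbTE ->.
- by rewrite (negbTE sj) (negbTE tj) !andbF.
Qed.

Lemma root_comp_connected A : root_comp A = W -> ncomp W (A :&: ind W) = 1%N.
Proof.
move=> cW; apply/eqP/(ncomp_eq1P src tgt _ iW) => y yW.
have /[1!inE] ciy : y \in root_comp A by rewrite cW.
have step x z : x \in root_comp A -> adj (A :&: ind (~: [set j])) x z ->
    (z \in root_comp A) && connect (adj (A :&: ind W)) (id x) (id z).
  move=> /[dup] xc; rewrite inE => cix xz.
  have zc : z \in root_comp A by rewrite inE (connect_trans cix) ?connect1.
  rewrite zc connect1 //; apply: adj_sub (setSI _ (subsetIl _ _)) _.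
  by apply: adj_setI_ind xz; rewrite -cW.
by case/andP: (connect_map_inv step (root_comp_i A) ciy).
Qed.

Lemma root_comp_edges A : root_comp A = W -> A \subset ind W :|: ind (~: W) :|: cut.
Proof.
move=> cW; apply/subsetP => e eA; rewrite !inE.
have sides := root_comp_edge eA; rewrite cW in sides.
case sW: (src e \in W); case tW: (tgt e \in W) => //=.
- by case: (eqVneq (tgt e) j) => // tj; move: (sides (neq_j sW) tj); rewrite sW tW.
- by case: (eqVneq (src e) j) => // sj; move: (sides sj (neq_j tW)); rewrite sW tW.
Qed.

Lemma root_comp_eq A : ncomp W (A :&: ind W) = 1%N ->
  A \subset ind W :|: ind (~: W) :|: cut -> root_comp A = W.
Proof.
move=> /eqP/(ncomp_eq1P src tgt _ iW) connW sA; apply/setP => y; rewrite inE.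
apply/idP/idP => [ciy | yW].
  have step x z : x \in W -> adj (A :&: ind (~: [set j])) x z ->
      (z \in W) && connect (adj A) (id x) (id z).
    move=> xW /[dup] /(adj_sub (subsetIl _ _)) /connect1 ->; rewrite andbT.
    case/adjP=> e /setIP[eA]; rewrite in_ind_edges !inE => /andP[sj tj].
    have := split_edge_sides (subsetP sA e eA) sj tj.
    move=> sides /orP[]/andP[/eqP e1 /eqP e2]; subst x z; by rewrite ?sides // -sides.
  by case/andP: (connect_map_inv step iW ciy).
apply: connect_adj_sub (connW y yW); apply/setIS/ind_edgesS/subsetP => x xW.
by rewrite !inE neq_j.
Qed.

Lemma root_compE A : (root_comp A == W) =
  (ncomp W (A :&: ind W) == 1%N) && (A \subset ind W :|: ind (~: W) :|: cut).
Proof.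
apply/eqP/andP => [cW | [/eqP n1 sA]]; last exact: root_comp_eq.
by rewrite root_comp_connected // root_comp_edges.
Qed.

Lemma connect_glue_W A A1 : A1 \subset A -> ncomp W A1 = 1%N ->
  {in W &, forall x y, connect (adj A) x y}.
Proof.
move=> sA1A /eqP/(ncomp_eq1P src tgt _ iW) conn_i x y xW yW.
rewrite (connect_trans _ (connect_adj_sub sA1A (conn_i y yW))) //.
by rewrite connect_adj_sym (connect_adj_sub sA1A) ?conn_i.
Qed.

Lemma connect_glue_j A A1 S : A1 \subset A -> ncomp W A1 = 1%N ->
  S \subset A :&: cut -> S != set0 -> {in W, forall x, connect (adj A) x j}.
Proof.
move=> sA1A nA1 sS /set0Pn[e eS] x xW; have /setIP[eA] := subsetP sS e eS.
have eadj : adj A (src e) (tgt e) by apply/adjP; exists e; rewrite ?eqxx.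
rewrite in_cut_edges => /orP[]/andP[wW /eqP <-].
  exact: connect_trans (connect_glue_W sA1A nA1 xW wW) (connect1 eadj).
by rewrite (connect_trans (connect_glue_W sA1A nA1 xW wW)) // connect1 // adj_sym.
Qed.

Lemma ncomp_glue A1 A2 S : A1 \subset ind W -> ncomp W A1 = 1%N ->
  A2 \subset ind (~: W) -> S \subset cut ->
  ncomp [set: V] (A1 :|: A2 :|: S) = (ncomp (~: W) A2 + (S == set0))%N.
Proof.
move=> sA1 nA1 sA2 sS; set A := A1 :|: A2 :|: S.
have sA1A : A1 \subset A by apply/subsetP => e eA; rewrite !inE eA.
have sA2A : A2 \subset A by apply/subsetP => e eA; rewrite !inE eA orbT.
have sSA : S \subset A :&: cut.
  by apply/subsetP => e eS; rewrite in_setI (subsetP sS) // andbT !inE eS orbT.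
(* Contract W to a single vertex c: to i if no edge of A leaves W, and otherwise
   onto j, to which W is then joined. *)
pose c := if S == set0 then i else j.
pose f x := if x \in W then c else x.
pose Y := if S == set0 then i |: ~: W else ~: W.
have fY x : f x \in Y.
  by rewrite /f /Y /c; case: ifP => xW; case: (S == set0); rewrite !inE ?eqxx ?xW ?jW ?orbT.
have fid : {in Y, forall y, f y = y}.
  rewrite /Y /f /c => y; case: (S == set0); rewrite !inE; last by move/negbTE ->.
  by case/orP=> [/eqP -> | /negbTE ->]; rewrite ?iW.
have conn_f x : connect (adj A) x (f x).
  rewrite /f /c; case: ifP => xW; last exact: connect0.
  case: eqP => [_ | /eqP S0]; last exact: connect_glue_j sA1A nA1 sSA S0 x xW.
  exact: (connect_glue_W sA1A nA1 xW iW).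
have fA e : e \in A -> connect (adj A2) (f (src e)) (f (tgt e)).
  rewrite !inE => /orP[/orP[eA1 | eA2] | eS].
  - by move: (subsetP sA1 e eA1); rewrite in_ind_edges /f => /andP[-> ->].
  - move: (subsetP sA2 e eA2); rewrite in_ind_edges !inE /f => /andP[/negbTE -> /negbTE ->].
    by apply/connect1/adjP; exists e; rewrite ?eqxx.
  - have cj : c = j by rewrite /c; case: eqP => // S0; rewrite S0 inE in eS.
    move: (subsetP sS e eS); rewrite in_cut_edges /f cj.
    by case/orP=> /andP[-> /eqP ->]; rewrite (negbTE jW).
rewrite (ncomp_retract sA2A fY fid conn_f fA) /Y.
case: eqP => _; last by rewrite addn0.
by rewrite ncomp_setU1_isolated ?addn1 // inE negbK.
Qed.

End RootComponent.

Section SubsetExpansion.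
Variables (R : comNzRingType) (E : finType) (v : E -> R).

Lemma prod_1D_subsets (X : {set E}) :
  \prod_(e in X) (1 + v e) = \sum_(S : {set E} | S \subset X) \prod_(e in S) v e.
Proof.
rewrite big_mkcond /= (eq_bigr (fun e => (if e \in X then v e else 0) + 1)); last first.
  by move=> e _; case: ifP => _; rewrite ?add0r // addrC.
transitivity (\sum_(S : {set E}) \prod_e (if e \in S then (if e \in X then v e else 0) else 1)).
  by rewrite bigA_distr.
rewrite (bigID (fun S : {set E} => S \subset X)) /= [X in _ + X]big1 ?addr0; last first.
  by move=> S /subsetPn[e eS eX]; rewrite (bigD1 e) // eS (negbTE eX); exact: mul0r.
apply: eq_bigr => S sX; rewrite [RHS]big_mkcond; apply: eq_bigr => e _.
by case: ifP => // /(subsetP sX) ->.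
Qed.

Lemma sum_subsets_set0 (X : {set E}) (a : R) :
  \sum_(S : {set E} | S \subset X) (if S == set0 then a else 1) * \prod_(e in S) v e
  = a - 1 + \prod_(e in X) (1 + v e).
Proof.
rewrite prod_1D_subsets (bigD1 set0) ?sub0set // [in RHS](bigD1 set0) ?sub0set // big_set0.
have -> : (if set0 == set0 :> {set E} then a else 1) = a by rewrite eqxx.
rewrite mulr1 addrA subrK; congr (_ + _); apply: eq_bigr => S /andP[_ /negbTE ->].
by rewrite mul1r.
Qed.

End SubsetExpansion.

Lemma mulr_sum3 (R : comNzRingType) (I1 I2 I3 : finType)
    (P1 : pred I1) (P2 : pred I2) (P3 : pred I3) (F1 : I1 -> R) (F2 : I2 -> R) (F3 : I3 -> R) :
  (\sum_(x | P1 x) F1 x) * (\sum_(y | P2 y) F2 y) * (\sum_(z | P3 z) F3 z) =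
  \sum_(x | P1 x) \sum_(y | P2 y) \sum_(z | P3 z) F1 x * F2 y * F3 z.
Proof.
rewrite big_distrlr big_distrl /=; apply: eq_bigr => x _.
by rewrite big_distrl /=; apply: eq_bigr => y _; rewrite big_distrr.
Qed.

Lemma setIU3_disjoint (T : finType) (X Y Z A1 A2 A3 : {set T}) :
  [disjoint X & Y] -> [disjoint X & Z] -> [disjoint Y & Z] ->
  A1 \subset X -> A2 \subset Y -> A3 \subset Z ->
  [/\ (A1 :|: A2 :|: A3) :&: X = A1, (A1 :|: A2 :|: A3) :&: Y = A2
    & (A1 :|: A2 :|: A3) :&: Z = A3].
Proof.
move=> dXY dXZ dYZ sA1 sA2 sA3.
have dis (U U' B B' : {set T}) : [disjoint U & U'] -> B \subset U -> B' \subset U' ->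
    B :&: U' = set0 /\ B' :&: U = set0.
  move=> dUU' sB sB'; split; apply: disjoint_setI0; first exact: disjointWl sB dUU'.
  by apply: disjointWl sB' _; rewrite disjoint_sym.
have [z12 z21] := dis _ _ _ _ dXY sA1 sA2; have [z13 z31] := dis _ _ _ _ dXZ sA1 sA3.
have [z23 z32] := dis _ _ _ _ dYZ sA2 sA3.
rewrite !setIUl (setIidPl sA1) (setIidPl sA2) (setIidPl sA3).
by rewrite z12 z13 z21 z23 z31 z32 ?setU0 ?set0U.
Qed.

Section RootComponentSums.
Variables (R : comNzRingType) (V E : finType) (src tgt : E -> V) (v : E -> R) (q : R).
Variables (i j : V) (W : {set V}) (iW : i \in W) (jW : j \notin W).
Local Notation ncomp := (ncomp src tgt).
Local Notation ind := (ind_edges src tgt).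
Local Notation cut := (cut_edges src tgt W j).
Local Notation root_comp := (root_comp src tgt i j).
Implicit Types (A S : {set E}).

Lemma disjoint_ind_setC : [disjoint ind W & ind (~: W)].
Proof.
rewrite -setI_eq0; apply/eqP/setP => e; rewrite !inE.
by case: (src e \in W); rewrite ?andbF.
Qed.

Lemma disjoint_ind_cut : [disjoint ind W & cut].
Proof.
rewrite -setI_eq0; apply/eqP/setP => e; rewrite !inE; apply/negbTE/negP.
by case/andP=> /andP[sW tW] /orP[]/andP[_ /eqP ej]; move: jW; rewrite -ej ?sW ?tW.
Qed.

Lemma disjoint_indC_cut : [disjoint ind (~: W) & cut].
Proof.
rewrite -setI_eq0; apply/eqP/setP => e; rewrite !inE.
by case: (src e \in W); case: (tgt e \in W); rewrite ?andbF.
Qed.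

Lemma sum_root_comp_split (F : {set E} -> R) :
  \sum_(A : {set E} | root_comp A == W) F A =
  \sum_(A1 : {set E} | (A1 \subset ind W) && (ncomp W A1 == 1%N))
    \sum_(A2 : {set E} | A2 \subset ind (~: W))
      \sum_(S : {set E} | S \subset cut) F (A1 :|: A2 :|: S).
Proof.
under [RHS]eq_bigr => A1 _ do rewrite pair_big.
rewrite pair_big /= (reindex_onto (fun p : {set E} * ({set E} * {set E}) => p.1 :|: p.2.1 :|: p.2.2)
   (fun A => (A :&: ind W, (A :&: ind (~: W), A :&: cut)))) /=; last first.
  by move=> A; rewrite root_compE // => /andP[_ sA]; rewrite -!setIUr; apply/setIidPl.
apply: eq_bigl => -[A1 [A2 S]] /=; apply/idP/idP.
  case/andP=> + /eqP; move: (A1 :|: A2 :|: S) => A + [<- <- <-].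
  by rewrite root_compE // => /andP[-> _]; rewrite !subsetIr.
case/andP=> /andP[sA1 nA1] /andP[sA2 sS].
have [e1 e2 e3] := setIU3_disjoint disjoint_ind_setC disjoint_ind_cut disjoint_indC_cut sA1 sA2 sS.
by rewrite root_compE // e1 e2 e3 !eqxx nA1 !setUSS.
Qed.

Lemma prod_glue A1 A2 S : A1 \subset ind W -> A2 \subset ind (~: W) -> S \subset cut ->
  \prod_(e in A1 :|: A2 :|: S) v e =
  \prod_(e in A1) v e * \prod_(e in A2) v e * \prod_(e in S) v e.
Proof.
move=> sA1 sA2 sS; have d12 : [disjoint A1 & A2].
  exact: disjointWl sA1 (disjointWr sA2 disjoint_ind_setC).
have d123 : [disjoint A1 :|: A2 & S].
  have d13 := disjointWl sA1 (disjointWr sS disjoint_ind_cut).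
  have d23 := disjointWl sA2 (disjointWr sS disjoint_indC_cut).
  by rewrite -setI_eq0 setIUl !disjoint_setI0 ?setU0.
have prodU (B B' : {set E}) : [disjoint B & B'] ->
    \prod_(e in B :|: B') v e = \prod_(e in B) v e * \prod_(e in B') v e.
  by move=> dBB'; rewrite -bigU //; apply: eq_bigl => e; rewrite !inE.
by rewrite !prodU.
Qed.

Lemma sum_root_comp_Z :
  \sum_(A : {set E} | root_comp A == W) q ^+ ncomp [set: V] A * \prod_(e in A) v e =
  (q - 1 + \prod_(e in cut) (1 + v e)) * Cpol src tgt W v * Zpol src tgt (~: W) q v.
Proof.
rewrite sum_root_comp_split -sum_subsets_set0 /Cpol /Zpol -mulrA mulrC mulr_sum3.
apply: eq_bigr => A1 /andP[sA1 /eqP nA1]; apply: eq_bigr => A2 sA2; apply: eq_bigr => S sS.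
rewrite (ncomp_glue iW jW sA1 nA1 sA2 sS) prod_glue // exprD.
have -> : q ^+ (S == set0) = (if S == set0 then q else 1) by case: eqP.
by rewrite mulrACA; congr (_ * _); rewrite mulrCA.
Qed.

Lemma sum_root_comp_C :
  \sum_(A : {set E} | root_comp A == W)
    (if ncomp [set: V] A == 1%N then \prod_(e in A) v e else 0) =
  (\prod_(e in cut) (1 + v e) - 1) * Cpol src tgt W v * Cpol src tgt (~: W) v.
Proof.
have -> : \prod_(e in cut) (1 + v e) - 1 =
    \sum_(S : {set E} | S \subset cut) (if S == set0 then 0 else 1) * \prod_(e in S) v e.
  by rewrite sum_subsets_set0 add0r addrC.
have -> : Cpol src tgt (~: W) v = \sum_(A2 : {set E} | A2 \subset ind (~: W))
    (if ncomp (~: W) A2 == 1%N then \prod_(e in A2) v e else 0) by rewrite /Cpol big_mkcondr.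
rewrite sum_root_comp_split /Cpol -mulrA mulrC mulr_sum3.
apply: eq_bigr => A1 /andP[sA1 /eqP nA1]; apply: eq_bigr => A2 sA2; apply: eq_bigr => S sS.
rewrite (ncomp_glue iW jW sA1 nA1 sA2 sS) prod_glue //.
have jWC : j \in ~: W by rewrite inE.
have [_ | _] := eqVneq S set0.
  by rewrite addn1 eqSS (gtn_eqF (ncomp_gt0 _ _ A2 jWC)) mul0r mulr0.
by rewrite addn0; case: ifP => _; rewrite ?mul1r ?mulr0 ?mul0r // mulrC.
Qed.

End RootComponentSums.

Theorem theorem4p1 (R : comNzRingType) (V E : finType) (src tgt : E -> V)
    (v : E -> R) (q : R) (i j : V) (hij : i != j) :
  Zpol src tgt [set: V] q v =
    \sum_(W : {set V} | (i \in W) && (j \notin W))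
      (q - 1 + \prod_(e in cut_edges src tgt W j) (1 + v e))
        * Cpol src tgt W v * Zpol src tgt (~: W) q v
  /\
  Cpol src tgt [set: V] v =
    \sum_(W : {set V} | (i \in W) && (j \notin W))
      (\prod_(e in cut_edges src tgt W j) (1 + v e) - 1)
        * Cpol src tgt W v * Cpol src tgt (~: W) v.
Proof.
have edges_all (A : {set E}) : A \subset ind_edges src tgt [set: V].
  by apply/subsetP => e _; rewrite in_ind_edges !inE.
pose separates (W : {set V}) := (i \in W) && (j \notin W).
have root_comp_ij (A : {set E}) : A \subset ind_edges src tgt [set: V] ->
    separates (root_comp src tgt i j A).
  by rewrite /separates root_comp_i root_comp_j.
split.
- rewrite {1}/Zpol (partition_big _ separates root_comp_ij) /=.
  apply: eq_bigr => W /andP[iW jW]; rewrite -(sum_root_comp_Z src tgt v q iW jW).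
  by apply: eq_bigl => A; rewrite edges_all.
- rewrite {1}/Cpol big_mkcondr /= (partition_big _ separates root_comp_ij) /=.
  apply: eq_bigr => W /andP[iW jW]; rewrite -(sum_root_comp_C src tgt v iW jW).
  by apply: eq_bigl => A; rewrite edges_all.
Qed.
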